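(* Let $k\ge1$, let $\lambda,\lambda_1$ be functions $\mathfrak U\to\mathbb N$ with $\lambda(\mathcal U)^k\le\lambda_1(\mathcal U)<|\mathcal U|$ for all $\mathcal U\in\mathfrak U$, and let $R$ be a $k$-place relation such that for each $\mathcal U$, $R[\mathcal U]$ is a relation on a set $A[\mathcal U]\subseteq\mathcal U$ with $|A[\mathcal U]|\le\lambda(\mathcal U)$. Then $Q_R\le_{\mathrm{exp}}Q^{1-1}_{\lambda_1}$.
   Context: Framework: $\mathfrak U$ is a fixed nonempty family of finite sets. A relation $R$ of arity $k$ assigns to each $\mathcal U\in\mathfrak U$ a $k$-place relation $R[\mathcal U]$ on $\mathcal U$. A class $K$ assigns to each $\mathcal U$ a set $K[\mathcal U]$ of $n(K)$-place relations on $\mathcal U$ closed under permutations of $\mathcal U$; $\exists_K=Q_K$ is the second-order quantifier ranging over $K[\mathcal U]$; $Q_R$ is $Q_{K_R}$ where $K_R[\mathcal U]$ is the set of images of $R[\mathcal U]$ under permutations of $\mathcal U$. $Q_{K_1}\le_{\mathrm{exp}}Q_{K_2}$ (expressibility) means there is a formula $\varphi(x_0,\dots,x_{n(K_1)-1},S_0,\dots,S_{m-1})$ of first-order logic extended by the quantifier $Q_{K_2}$, the same for all $\mathcal U\in\mathfrak U$, such that for every $\mathcal U$ and every $R'\in K_1[\mathcal U]$ there are $S_0,\dots,S_{m-1}\in K_2[\mathcal U]$ with $R'=\{\bar a:(\mathcal U,\bar S)\models\varphi(\bar a)\}$. $Q^{1-1}_{\lambda_1}$ is the quantifier over graphs of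 partial one-to-one functions $f$ from $\mathcal U$ to $\mathcal U$ with $|\mathrm{dom}(f)|=\lambda_1(\mathcal U)$. *)

From mathcomp Require Import all_boot perm.
Set Implicit Arguments. Unset Strict Implicit. Unset Printing Implicit Defensive.

(* A universe is a finite type T.  A class K of arity n assigns to each universe a set
   of n-place relations. *)

Definition perm_rel (T : finType) n (s : {perm T}) (r : {set n.-tuple T})
  : {set n.-tuple T} := [set map_tuple s t | t in r].

Definition QR_class (T : finType) n (r : {set n.-tuple T})
  : {set {set n.-tuple T}} := [set perm_rel s r | s : {perm T}].

Definition Q11_class (T : finType) (l1 : nat) : {set {set 2.-tuple T}} :=
  [set G : {set 2.-tuple T} | [exists D : {set T}, exists f : {ffun T -> T},
       [&& [forall x in D, forall y in D, (f x == f y) ==> (x == y)],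
           #|D| == l1 &
           G == [set [tuple x; f x] | x in D]]]].

(* Syntax of first-order logic (with equality) over relation variables of
   arity n, extended by the second-order quantifier Q_K ranging over the
   n-place relations of K.  De Bruijn indices: FEx binds individual
   variable 0, FQ binds relation variable 0. *)
Inductive form (n : nat) : Type :=
| FEq : nat -> nat -> form n
| FRel : nat -> n.-tuple nat -> form n
| FNot : form n -> form n
| FAnd : form n -> form n -> form n
| FEx : form n -> form n
| FQ : form n -> form n.
Arguments FEq {n}. Arguments FRel {n}. Arguments FNot {n}.
Arguments FAnd {n}. Arguments FEx {n}. Arguments FQ {n}.

(* Satisfaction; e = individual environment, eS = relation environment.
   Out-of-range variables make atoms false. *)
Fixpoint sat (T : finType) n (K : {set {set n.-tuple T}})
  (e : seq T) (eS : seq {set n.-tuple T}) (phi : form n) : Prop :=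
  match phi with
  | FEq i j => match onth e i, onth e j with
               | Some a, Some b => a = b | _, _ => False end
  | FRel s args => match onth eS s with
               | Some Sr => exists t : n.-tuple T,
                   map Some (tval t) = map (onth e) (tval args) /\ t \in Sr
               | None => False end
  | FNot p => ~ sat K e eS p
  | FAnd p q => sat K e eS p /\ sat K e eS q
  | FEx p => exists a : T, sat K (a :: e) eS p
  | FQ p => exists Sr, Sr \in K /\ sat K e (Sr :: eS) p
  end.

(* Q_{K1} <=_exp Q_{K2}: one formula phi(x_0..x_{n1-1}, S_0..S_{m-1}) of
   FO + Q_{K2}, uniform over the family, defining every R' in K1[U] from
   suitable S_j in K2[U].  x_i is individual variable i, S_j relation
   variable j. *)
Definition expressible (I : Type) (U : I -> finType) n1 n2
  (K1 : forall i, {set {set n1.-tuple (U i)}})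
  (K2 : forall i, {set {set n2.-tuple (U i)}}) : Prop :=
  exists (m : nat) (phi : form n2),
    forall i, forall R' : {set n1.-tuple (U i)}, R' \in K1 i ->
      exists S : m.-tuple {set n2.-tuple (U i)},
        (forall j : 'I_m, tnth S j \in K2 i) /\
        forall a : n1.-tuple (U i),
          a \in R' <-> sat (K2 i) (tval a) (tval S) phi.

From mathcomp Require Import all_boot perm.
Set Implicit Arguments. Unset Strict Implicit. Unset Printing Implicit Defensive.

(* A permuted copy R' of R has |R'| = |R| <= |A|^k <= lam^k <= lam1 < |U|, so the
   tuples of R' can be coded injectively by points of U.  For each coordinate j take
   three partial injections with domains of size lam1: M_j, whose fixed points
   are exactly the j-th coordinates of tuples of R'; E_j, sending such a
   coordinate x to the code of some tuple t with t_j = x; and S_j, sending the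
   code of t to the code of the next tuple in a cyclic listing of the tuples
   sharing the j-th coordinate of t.  Then a is in R' iff some code c satisfies,
   for every j, "a_j is fixed by M_j and c is S_j-reachable from E_j(a_j)".
   Reachability is expressible with Q^{1-1}_lam1: c is reachable from d iff c is
   fixed by every partial injection with domain of size lam1 whose fixed points
   contain d and are closed under S_j.  For the nontrivial direction, test with
   a partial injection whose fixed points are exactly the codes on one S_j-cycle;
   it exists because that cycle has at most lam1 < |U| points. *)

Lemma leq_card_embedding (aT rT : finType) (y0 : rT) (A : {set aT}) (B : {set rT}) :
  #|A| <= #|B| ->
  exists2 h : aT -> rT, {in A &, injective h} & {in A, forall x, h x \in B}.
Proof.
move=> leAB; pose h x := nth y0 (enum B) (index x (enum A)).
have idx_lt x : x \in A -> index x (enum A) < size (enum B).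
  by move=> xA; rewrite -cardE (leq_trans _ leAB) // cardE index_mem mem_enum.
exists h => [x1 x2 x1A x2A /eqP|x xA]; last by rewrite -mem_enum mem_nth ?idx_lt.
rewrite /h nth_uniq ?enum_uniq ?idx_lt // => /eqP/(congr1 (nth x1 (enum A))).
by rewrite !nth_index ?mem_enum.
Qed.

Lemma onth_tuple (X : Type) n (t : n.-tuple X) (i : 'I_n) : onth t i = Some (tnth t i).
Proof. by rewrite onthE (nth_map (tnth t i)) ?size_tuple // -tnth_nth. Qed.

Lemma next_fixed_eq (T : finType) (p : seq T) x y :
  uniq p -> x \in p -> y \in p -> next p x = x -> y = x.
Proof.
move=> p_uniq px py fix_x.
have := fconnect_cycle (cycle_next p_uniq) px y; rewrite py.
by move/iter_findex <-; apply: iter_fix.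
Qed.

Lemma exists_superset_card (T : finType) (D : {set T}) n :
  #|D| <= n <= #|T| -> exists2 W : {set T}, D \subset W & #|W| = n.
Proof.
case/andP=> Dn nT; have: n - #|D| <= #|~: D| by rewrite leq_subLR cardsC.
case/card_geqP=> s [s_uniq s_size sD]; exists (D :|: [set x in s]).
  exact: subsetUl.
rewrite cardsU (_ : D :&: _ = set0) ?cards0 ?subn0.
  by rewrite cardsE (card_uniqP s_uniq) s_size subnKC.
by apply/setP=> x; rewrite !inE; apply/andP=> -[xD /sD]; rewrite inE xD.
Qed.

Section PartialInjections.

Variables (T : finType) (l1 : nat).

Definition graph (W : {set T}) (f : T -> T) : {set 2.-tuple T} :=
  [set [tuple w; f w] | w in W].

Lemma mem_graph (W : {set T}) (f : T -> T) u v :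
  ([tuple u; v] \in graph W f) = (u \in W) && (v == f u).
Proof.
apply/imsetP/andP => [[w wW [-> ->]] | [uW /eqP ->]]; first by rewrite eqxx.
by exists u.
Qed.

Lemma graph_Q11 (W : {set T}) (f : T -> T) :
  #|W| = l1 -> {in W &, injective f} -> graph W f \in Q11_class T l1.
Proof.
move=> W_card f_inj; rewrite inE; apply/existsP; exists W; apply/existsP.
exists [ffun w => f w]; apply/and3P; split; rewrite ?W_card //.
  apply/forall_inP=> x xW; apply/forall_inP=> y yW; rewrite !ffunE.
  by apply/implyP=> /eqP/f_inj->.
by apply/eqP/eq_imset=> x; rewrite ffunE.
Qed.

Lemma Q11_transport (aT : finType) (D : {set aT}) (f g : aT -> T) :
  #|D| <= l1 <= #|T| -> {in D &, injective f} -> {in D &, injective g} ->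
  exists2 G, G \in Q11_class T l1 &
    forall t v, t \in D -> ([tuple f t; v] \in G) = (v == g t).
Proof.
move=> /andP[Dl1 l1T] f_inj g_inj.
have fD_card : #|f @: D| = #|D| by rewrite card_in_imset.
have [W fDW W_card] : exists2 W : {set T}, f @: D \subset W & #|W| = l1.
  by apply: exists_superset_card; rewrite fD_card Dl1.
set A := W :\: f @: D; set B := ~: g @: D.
have [h h_inj hB] : exists2 h : T -> T, {in A &, injective h} & {in A, forall x, h x \in B}.
  have [-> | [y0 _]] := set_0Vmem A; first by exists id => // x; rewrite inE.
  apply: (leq_card_embedding y0); rewrite cardsD (setIidPr fDW) W_card fD_card.
  by rewrite /B leq_subLR -(card_in_imset g_inj) cardsC.
pose F u := if [pick t in D | f t == u] is Some t then g t else h u.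
have F_f t : t \in D -> F (f t) = g t.
  move=> tD; rewrite /F; case: pickP => [t' /andP[t'D /eqP/f_inj-> //] | /(_ t)].
  by rewrite tD eqxx.
have F_A u : u \in A -> F u = h u.
  rewrite /F; case: pickP => // t /andP[tD /eqP <-].
  by rewrite inE imset_f.
exists (graph W F) => [|t v tD]; last first.
  by rewrite mem_graph F_f // (subsetP fDW) ?imset_f.
apply: graph_Q11 => // u1 u2 u1W u2W.
have F_B u : u \in W -> u \notin f @: D -> F u \notin g @: D.
  by move=> uW uf; rewrite F_A ?inE ?uf //; have := hB u; rewrite !inE uf uW => ->.
have [/imsetP[t1 t1D ->] | u1f] := boolP (u1 \in f @: D).
  have [/imsetP[t2 t2D ->] | u2f] := boolP (u2 \in f @: D).
    by rewrite !F_f // => /g_inj->.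
  by have := F_B u2 u2W u2f; rewrite F_f // => /[swap] <- /negP[]; apply: imset_f.
have [/imsetP[t2 t2D ->] | u2f] := boolP (u2 \in f @: D).
  by have := F_B u1 u1W u1f; rewrite F_f // => /[swap] -> /negP[]; apply: imset_f.
by rewrite !F_A ?inE ?u1f ?u2f //; apply: h_inj; rewrite inE ?u1f ?u2f.
Qed.

Lemma Q11_fixpoints (Z : {set T}) :
  #|Z| <= l1 < #|T| ->
  exists2 G, G \in Q11_class T l1 & forall u, ([tuple u; u] \in G) = (u \in Z).
Proof.
move=> /andP[Zl1 l1T].
have [W ZW W_card] : exists2 W : {set T}, Z \subset W & #|W| = l1.
  by apply: exists_superset_card; rewrite Zl1 ltnW.
have [z0] : exists z0, z0 \in ~: W.
  by apply/set0Pn; rewrite -card_gt0 cardsCs setCK subn_gt0 W_card.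
(* The points of W outside Z are moved along a cycle through z0 \notin W. *)
rewrite inE => z0W; set L := z0 :: enum (W :\: Z).
have L_uniq : uniq L by rewrite /= enum_uniq mem_enum !inE negb_and z0W orbT.
have L_Z u : u \in L -> u \notin Z.
  rewrite inE mem_enum !inE => /orP[/eqP-> | /andP[] //].
  by apply: contra z0W; apply: (subsetP ZW).
have W_L u : u \in W -> u \notin Z -> u \in L.
  by move=> uW uZ; rewrite inE mem_enum !inE uW uZ orbT.
pose F u := if u \in Z then u else next L u.
exists (graph W F) => [|u]; last first.
  rewrite mem_graph /F; have [uZ | uZ] := boolP (u \in Z); first by rewrite eqxx (subsetP ZW).
  apply/negP=> /andP[uW /eqP/esym fix_u].
  by move: z0W; rewrite (next_fixed_eq L_uniq (W_L u uW uZ) (mem_head _ _) fix_u) uW.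
apply: graph_Q11 => // u1 u2 u1W u2W; rewrite /F.
have [u1Z | u1Z] := boolP (u1 \in Z); have [u2Z | u2Z] := boolP (u2 \in Z) => //.
- by move=> u12; have := L_Z (next L u2); rewrite mem_next W_L // -u12 u1Z => /(_ isT).
- by move=> u12; have := L_Z (next L u1); rewrite mem_next W_L // u12 u2Z => /(_ isT).
- exact/can_inj/prev_next.
Qed.

Definition Q11_reach (S : {set 2.-tuple T}) (d c : T) : Prop :=
  forall G, G \in Q11_class T l1 -> [tuple d; d] \in G ->
    (forall u v, [tuple u; u] \in G -> [tuple u; v] \in S -> [tuple v; v] \in G) ->
    [tuple c; c] \in G.

End PartialInjections.

Section Fibers.

Variables (T : finType) (k l1 : nat) (Rp : {set k.-tuple T}).
Variable code : k.-tuple T -> T.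
Hypotheses (code_inj : {in Rp &, injective code}) (Rp_l1 : #|Rp| <= l1) (l1_T : l1 < #|T|).
Variable j : 'I_k.

Definition coords : {set T} := [set tnth t j | t in Rp].

Definition fiber (x : T) : seq (k.-tuple T) := [seq t <- enum Rp | tnth t j == x].

Definition step (t : k.-tuple T) : k.-tuple T := next (fiber (tnth t j)) t.

Lemma mem_fiber x t : (t \in fiber x) = (t \in Rp) && (tnth t j == x).
Proof. by rewrite mem_filter mem_enum andbC. Qed.

Lemma fiber_uniq x : uniq (fiber x).
Proof. exact/filter_uniq/enum_uniq. Qed.

Lemma step_fiber x t : t \in fiber x -> step t = next (fiber x) t.
Proof. by rewrite mem_fiber /step => /andP[_ /eqP->]. Qed.

Lemma mem_step t : t \in Rp -> step t \in fiber (tnth t j).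
Proof. by move=> tR; rewrite mem_next mem_fiber tR eqxx. Qed.

Lemma step_Rp t : t \in Rp -> step t \in Rp.
Proof. by move/mem_step; rewrite mem_fiber => /andP[]. Qed.

Lemma tnth_step t : t \in Rp -> tnth (step t) j = tnth t j.
Proof. by move/mem_step; rewrite mem_fiber => /andP[_ /eqP]. Qed.

Lemma step_inj : {in Rp &, injective step}.
Proof.
move=> t1 t2 t1R t2R step12.
have t12j : tnth t1 j = tnth t2 j by rewrite -(tnth_step t1R) step12 tnth_step.
by move: step12; rewrite /step t12j => /(can_inj (prev_next (fiber_uniq _))).
Qed.

Lemma Q11_reach_fiber (S : {set 2.-tuple T}) t c :
  (forall s v, s \in Rp -> ([tuple code s; v] \in S) = (v == code (step s))) ->
  t \in Rp ->
  Q11_reach l1 S (code t) c <-> exists2 s, s \in fiber (tnth t j) & c = code s.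
Proof.
move=> S_step tR; set p := fiber (tnth t j).
have tp : t \in p by rewrite mem_fiber tR eqxx.
have pR s : s \in p -> s \in Rp by rewrite mem_fiber => /andP[].
split=> [reach_c | [s sp ->] G GQ Gt G_closed].
  set Z := code @: [set s | s \in p].
  have [|G GQ G_fix] := Q11_fixpoints (l1 := l1) (Z := Z).
    rewrite l1_T andbT (leq_trans (leq_imset_card _ _)) // (leq_trans _ Rp_l1) //.
    by apply/subset_leq_card/subsetP=> s; rewrite inE => /pR.
  have Z_closed u v : u \in Z -> [tuple u; v] \in S -> v \in Z.
    case/imsetP=> s; rewrite inE => sp ->; rewrite S_step ?pR // => /eqP->.
    by rewrite imset_f // inE (step_fiber sp) mem_next.
  have : [tuple c; c] \in G.
    apply: (reach_c G GQ) => [|u v]; rewrite ?G_fix; first by rewrite imset_f ?inE.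
    exact: Z_closed.
  by rewrite G_fix => /imsetP[s]; rewrite inE; exists s.
have /iter_findex <- : fconnect (next p) t s.
  by rewrite (fconnect_cycle (cycle_next (fiber_uniq _)) tp).
have iter_p n : iter n (next p) t \in p by elim: n => //= n; rewrite mem_next.
elim: (findex _ t s) => [|n IHn] //=.
by apply: G_closed IHn _; rewrite S_step ?pR // (step_fiber (iter_p n)).
Qed.

Definition coord_graphs (M E S : {set 2.-tuple T}) : Prop :=
  [/\ forall u, ([tuple u; u] \in M) = (u \in coords),
      forall x, x \in coords ->
        exists2 t, t \in fiber x & forall v, ([tuple x; v] \in E) = (v == code t)
    & forall s v, s \in Rp -> ([tuple code s; v] \in S) = (v == code (step s))].

(* t0 is only the default of head, never used on the nonempty fibers over coords. *)
Lemma coord_graphs_exist (t0 : k.-tuple T) :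
  exists M E S, [/\ M \in Q11_class T l1, E \in Q11_class T l1,
                    S \in Q11_class T l1 & coord_graphs M E S].
Proof.
have l1_T' : l1 <= #|T| := ltnW l1_T.
have coords_l1 : #|coords| <= l1 := leq_trans (leq_imset_card _ _) Rp_l1.
have [|M MQ M_fix] := Q11_fixpoints (l1 := l1) (Z := coords); first by rewrite coords_l1.
pose rep x := head t0 (fiber x).
have rep_fiber x : x \in coords -> rep x \in fiber x.
  case/imsetP=> t tR ->; rewrite /rep.
  by case: (fiber _) (mem_fiber (tnth t j) t) => [|s ss]; rewrite ?mem_head // tR eqxx.
have rep_inj : {in coords &, injective (code \o rep)}.
  move=> x1 x2 /rep_fiber + /rep_fiber + /code_inj; rewrite !mem_fiber.
  by move=> /andP[r1R /eqP r1j] /andP[r2R /eqP r2j] /(_ r1R r2R) r12; rewrite -r1j r12.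
have [E EQ E_rep] : exists2 E, E \in Q11_class T l1 &
    forall x v, x \in coords -> ([tuple x; v] \in E) = (v == code (rep x)).
  by apply: (Q11_transport (f := id) _ _ rep_inj) => //; rewrite coords_l1.
have code_step_inj : {in Rp &, injective (code \o step)}.
  move=> t1 t2 t1R t2R /= codes12; apply: step_inj => //.
  exact: code_inj (step_Rp t1R) (step_Rp t2R) codes12.
have [S SQ S_step] : exists2 S, S \in Q11_class T l1 &
    forall s v, s \in Rp -> ([tuple code s; v] \in S) = (v == code (step s)).
  by apply: (Q11_transport _ code_inj code_step_inj); rewrite Rp_l1.
exists M, E, S; split=> //; split=> // x xA.
by exists (rep x); [apply: rep_fiber | move=> v; apply: E_rep].
Qed.

Lemma coord_graphsP M E S : coord_graphs M E S -> forall x c,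
  ([tuple x; x] \in M /\ exists d, [tuple x; d] \in E /\ Q11_reach l1 S d c) <->
  exists2 t, t \in Rp & tnth t j = x /\ c = code t.
Proof.
case=> M_fix E_rep S_step x c; rewrite M_fix; split.
  case=> xA [d []]; have [t tx ->] := E_rep x xA; move=> /eqP ->.
  have := tx; rewrite mem_fiber => /andP[tR /eqP tj].
  case/(Q11_reach_fiber _ S_step tR)=> s; rewrite tj mem_fiber => /andP[sR /eqP sj] ->.
  by exists s.
case=> t tR [<- ->]; have tA : tnth t j \in coords by apply: imset_f.
split=> //; have [s st E_s] := E_rep _ tA; exists (code s); rewrite E_s; split=> //.
have := st; rewrite mem_fiber => /andP[sR /eqP sj].
by apply/(Q11_reach_fiber _ S_step sR); exists t; rewrite ?mem_fiber ?tR ?sj ?eqxx.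
Qed.

End Fibers.

Lemma mem_by_codes (T : finType) (X : Type) k (Rp : {set k.-tuple T})
    (code : k.-tuple T -> X) (a : k.-tuple T) :
  0 < k -> {in Rp &, injective code} ->
  a \in Rp <-> exists c, forall j : 'I_k, exists2 t, t \in Rp & tnth t j = tnth a j /\ c = code t.
Proof.
move=> k_gt0 code_inj; split=> [aR | [c same]]; first by exists (code a) => j; exists a.
have [t tR [_ ct]] := same (Ordinal k_gt0).
suff -> : a = t by [].
apply: eq_from_tnth => j; have [s sR [<- cs]] := same j.
by have -> : s = t by apply: code_inj; rewrite // -cs -ct.
Qed.

Definition FTrue n : form n := FNot (FAnd (FEq 0 0) (FNot (FEq 0 0))).

Definition FAnds n (ps : seq (form n)) : form n := foldr (@FAnd n) (FTrue n) ps.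

Definition fixed_form (s i : nat) : form 2 := FRel s [tuple i; i].

(* Under FQ the quantified relation is variable 0, so S becomes s.+1; the two
   FEx bind u (variable 1) and v (variable 0). *)
Definition reach_form (s d c : nat) : form 2 :=
  FNot (FQ (FAnd (fixed_form 0 d) (FAnd
    (FNot (FEx (FEx (FAnd (fixed_form 0 1)
       (FAnd (FRel s.+1 [tuple 1; 0]) (FNot (fixed_form 0 0)))))))
    (FNot (fixed_form 0 c))))).

(* Evaluated in the environment c :: a, with c the code, so a_j is variable j.+1;
   the relations are M_0..M_(k-1), E_0..E_(k-1), S_0..S_(k-1), as in rel_env. *)
Definition coord_form (k j : nat) : form 2 :=
  FAnd (fixed_form j j.+1)
       (FEx (FAnd (FRel (k + j) [tuple j.+2; 0]) (reach_form (k + k + j) 0 1))).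

Definition tuple_form (k : nat) : form 2 :=
  FEx (FAnds [seq coord_form k j | j : 'I_k <- enum 'I_k]).

Section Satisfaction.

Variable T : finType.

Lemma sat_FAnds n (K : {set {set n.-tuple T}}) e eS (X : eqType) (F : X -> form n) s :
  sat K e eS (FAnds (map F s)) <-> forall x, x \in s -> sat K e eS (F x).
Proof.
elim: s => [|x s IHs] /=; first by split=> // _ [? []].
split=> [[Fx /IHs Fs] y | Fall]; first by rewrite inE => /orP[/eqP-> | /Fs].
by split=> [|]; [|apply/IHs=> y ys]; apply: Fall; rewrite inE ?eqxx ?ys ?orbT.
Qed.

Lemma sat_rel2 (K : {set {set 2.-tuple T}}) e eS s i i' (S : {set 2.-tuple T}) u v :
  onth eS s = Some S -> onth e i = Some u -> onth e i' = Some v ->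
  sat K e eS (FRel s [tuple i; i']) <-> [tuple u; v] \in S.
Proof.
move=> eSs ei ei' /=; rewrite eSs ei ei'; split=> [[t [t_uv tS]] | uvS].
  suff <- : t = [tuple u; v] by [].
  by apply: val_inj; case: t t_uv {tS} => -[|? [|? []]] //= _ [-> ->].
by exists [tuple u; v].
Qed.

Variable l1 : nat.

Lemma sat_reach_form e eS s d c (S : {set 2.-tuple T}) x y :
  onth eS s = Some S -> onth e d = Some x -> onth e c = Some y ->
  sat (Q11_class T l1) e eS (reach_form s d c) <-> Q11_reach l1 S x y.
Proof.
move=> eSs ed ec.
have fixedP G i z e' : onth e' i = Some z ->
    sat (Q11_class T l1) e' (G :: eS) (fixed_form 0 i) <-> [tuple z; z] \in G.
  by move=> e'i; apply: sat_rel2.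
have stepP G u v :
    sat (Q11_class T l1) (v :: u :: e) (G :: eS) (FRel s.+1 [tuple 1; 0]) <->
    [tuple u; v] \in S by apply: sat_rel2.
set e2 := fun u v : T => v :: u :: e.
split=> [no_G G GQ Gx G_closed | reach [G [GQ [Gx [no_escape Gy]]]]].
  apply/negPn/negP=> Gy; apply: no_G; exists G; split=> //.
  split; first exact/(fixedP G _ _ _ ed).
  split; last by move/(fixedP G _ _ _ ec); apply/negP.
  case=> u [v [Gu [uv Gv]]]; apply: Gv; apply/(fixedP G 0 v (e2 u v) (erefl _)).
  by apply: (G_closed u); [apply/(fixedP G 1 u (e2 u v) (erefl _)) | apply/(stepP G)].
apply/Gy/(fixedP G _ _ _ ec)/reach=> [//||u v Gu uv].
  exact/(fixedP G _ _ _ ed).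
apply/negPn/negP=> Gv; apply: no_escape; exists u, v.
split; first exact/(fixedP G 1 u (e2 u v) (erefl _)).
by split; [apply/(stepP G) | move/(fixedP G 0 v (e2 u v) (erefl _)); apply/negP].
Qed.

Lemma sat_coord_form k j (a : seq T) c eS (M E S : {set 2.-tuple T}) x :
  onth eS j = Some M -> onth eS (k + j) = Some E -> onth eS (k + k + j) = Some S ->
  onth a j = Some x ->
  sat (Q11_class T l1) (c :: a) eS (coord_form k j) <->
  [tuple x; x] \in M /\ exists d, [tuple x; d] \in E /\ Q11_reach l1 S d c.
Proof.
move=> eM eE eS' ax; set K := Q11_class T l1.
have Mx : sat K (c :: a) eS (fixed_form j j.+1) <-> [tuple x; x] \in M.
  exact: (sat_rel2 _ eM ax ax).
have Ex d : sat K (d :: c :: a) eS (FRel (k + j) [tuple j.+2; 0]) <-> [tuple x; d] \in E.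
  by apply: (sat_rel2 _ eE).
have Rc d : sat K (d :: c :: a) eS (reach_form (k + k + j) 0 1) <-> Q11_reach l1 S d c.
  exact: (sat_reach_form eS').
split=> [[/Mx xM [d [/Ex xd /Rc dc]]] | [/Mx xM [d [/Ex xd /Rc dc]]]].
  by split=> //; exists d.
by split=> //; exists d.
Qed.

End Satisfaction.

Section RelationEnvironment.

Variables (X : Type) (k : nat) (M E S : 'I_k -> X).

Definition rel_env : (k + k + k).-tuple X :=
  [tuple match split i with
         | inl i' => match split i' with inl j => M j | inr j => E j end
         | inr j => S j
         end | i < k + k + k].

Lemma onth_rel_env (j : 'I_k) :
  [/\ onth rel_env j = Some (M j), onth rel_env (k + j) = Some (E j)
    & onth rel_env (k + k + j) = Some (S j)].
Proof.
have inl2 := unsplitK (inl _ : 'I_(k + k) + 'I_k).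
split.
- move: (onth_tuple rel_env (lshift k (lshift k j))).
  by rewrite tnth_mktuple inl2 /= (unsplitK (inl _ : 'I_k + 'I_k)).
- move: (onth_tuple rel_env (lshift k (rshift k j))).
  by rewrite tnth_mktuple inl2 /= (unsplitK (inr _ : 'I_k + 'I_k)).
- move: (onth_tuple rel_env (rshift (k + k) j)).
  by rewrite tnth_mktuple (unsplitK (inr _ : 'I_(k + k) + 'I_k)).
Qed.

Lemma rel_env_ind (P : X -> Prop) :
  (forall j, [/\ P (M j), P (E j) & P (S j)]) -> forall i, P (tnth rel_env i).
Proof.
move=> MES i; rewrite tnth_mktuple; case: (split i) => [i' | j]; last by case: (MES j).
by case: (split i') => j; case: (MES j).
Qed.

End RelationEnvironment.

Lemma Q11_defines_small_rel (T : finType) k l1 (Rp : {set k.-tuple T}) :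
  0 < k -> #|Rp| <= l1 < #|T| ->
  exists S : (k + k + k).-tuple {set 2.-tuple T},
    (forall i, tnth S i \in Q11_class T l1) /\
    forall a : k.-tuple T, a \in Rp <-> sat (Q11_class T l1) a S (tuple_form k).
Proof.
move=> k_gt0 /andP[Rp_l1 l1_T].
have [x0 _] : exists x0 : T, x0 \in [set: T].
  by apply/set0Pn; rewrite -card_gt0 cardsT (leq_ltn_trans _ l1_T).
have [|code code_inj _] := @leq_card_embedding _ _ x0 Rp [set: T].
  by rewrite cardsT (leq_trans Rp_l1) // ltnW.
have /fin_all_exists[gr gr_spec] : forall j : 'I_k,
    exists gr : {set 2.-tuple T} * {set 2.-tuple T} * {set 2.-tuple T},
    [/\ gr.1.1 \in Q11_class T l1, gr.1.2 \in Q11_class T l1, gr.2 \in Q11_class T l1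
      & coord_graphs Rp code j gr.1.1 gr.1.2 gr.2].
  move=> j; have [M [E [S graphs]]] :=
    coord_graphs_exist code_inj Rp_l1 l1_T j [tuple of nseq k x0].
  by exists (M, E, S).
pose M j := (gr j).1.1; pose E j := (gr j).1.2; pose S j := (gr j).2.
exists (rel_env M E S); split=> [|a].
  by apply: (rel_env_ind (P := fun G => G \in _)) => j; case: (gr_spec j).
have coordP (j : 'I_k) c : sat (Q11_class T l1) (c :: a) (rel_env M E S) (coord_form k j) <->
    exists2 t, t \in Rp & tnth t j = tnth a j /\ c = code t.
  case: (onth_rel_env M E S j) (gr_spec j) => eM eE eS [_ _ _ graphs].
  exact: iff_trans (sat_coord_form l1 c eM eE eS (onth_tuple a j))
                   (coord_graphsP Rp_l1 l1_T graphs _ _).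
apply: (iff_trans (mem_by_codes a k_gt0 code_inj)).
split=> [[c same] | [c /sat_FAnds all_j]]; exists c.
  by apply/sat_FAnds => j _; apply/coordP.
by move=> j; apply/coordP/all_j; rewrite mem_enum.
Qed.

Lemma card_rel_leq_exp (T : finType) k (R : {set k.-tuple T}) (A : {set T}) :
  (forall t : k.-tuple T, t \in R -> forall x, x \in tval t -> x \in A) ->
  #|R| <= #|A| ^ k.
Proof.
move=> R_A; pose f (t : k.-tuple T) := [ffun j => tnth t j].
have f_inj : {in R &, injective f}.
  by move=> t1 t2 _ _ /ffunP f12; apply: eq_from_tnth => j; have := f12 j; rewrite !ffunE.
rewrite -(card_in_imset f_inj) -[k in _ ^ k]card_ord -card_ffun_on.
apply/subset_leq_card/subsetP=> _ /imsetP[t tR ->].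
by apply/ffun_onP=> j; rewrite ffunE (R_A t tR) ?mem_tnth.
Qed.

Theorem claim3p7 (I : Type) (U : I -> finType) (k : nat)
  (lam lam1 : I -> nat) (R : forall i, {set k.-tuple (U i)})
  (A : forall i, {set U i}) :
  inhabited I -> 1 <= k ->
  (forall i, lam i ^ k <= lam1 i /\ lam1 i < #|U i|) ->
  (forall i, #|A i| <= lam i) ->
  (forall i (t : k.-tuple (U i)), t \in R i -> forall x, x \in tval t -> x \in A i) ->
  expressible (fun i => QR_class (R i)) (fun i => Q11_class (U i) (lam1 i)).
Proof.
move=> _ k_gt0 lam_bounds A_lam R_A.
exists (k + k + k), (tuple_form k) => i _ /imsetP[s _ ->].
have [lam_lam1 lam1_U] := lam_bounds i.
apply: Q11_defines_small_rel => //; rewrite lam1_U andbT.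
apply: leq_trans (leq_imset_card _ _) _; apply: leq_trans (card_rel_leq_exp (R_A i)) _.
by apply: leq_trans lam_lam1; rewrite leq_exp2r.
Qed.
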